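(* For any constant $c > 0$, consider RLS-GP with $F = \{\mathrm{AND}, \mathrm{OR}\}$, $L = \{x_1, \ldots, x_n\}$, a tree size limit $\ell \ge n$, using in each iteration a fresh training set of $s = n^c \lg^2 n$ inputs sampled uniformly at random from $\{0,1\}^n$ to evaluate solution quality, and terminating (returning its current solution) when the sampled error of its current solution is at most $c' \lg n$, where $c'$ is an appropriately large constant. For the target $\mathrm{AND}_n$, and likewise for the target $\mathrm{OR}_n$, with probability at least $1 - O(\log^2(n)/n)$ the algorithm terminates within $O(\log n)$ iterations and returns a solution with generalisation error at most $n^{-c}$.
   Context: Programs are finite rooted binary trees (the empty tree is allowed) whose internal nodes are labelled by binary Boolean functions from $F$ and whose leaves are labelled by literals from $L$; a program computes a Boolean function of $(x_1,\dots,x_n)$ in the obvious way. $\mathrm{AND}_n(x) = x_1 \wedge \dots \wedge x_n$, $\mathrm{OR}_n(x) = x_1 \vee \dots \vee x_n$; $h$ denotes the target. The generalisation error of $X$ is $|\{x \in \{0,1\}^n : X(x) \ne h(x)\}|/2^n$. In each iteration a fresh training set of $s$ inputs is drawn independently and uniformly at random from $\{0,1\}^n$; the sampled error $f(X)$ of a program $X$ in that iteration is the number of sampled inputs on which $X$ differs from $h$; parent and offspring are evaluated on the same training set. LeafCount$(X)$ is the number of leaves. HVL-Prime with subtree deletion, applied to a tree $X$: choose $op \in \{\mathrm{INS}, \mathrm{DEL}, \mathrm{SUB}\}$, a literal $l \in L$ and a function $g \in F$, independently and uniformly at random. If $X$ is empty, the result is the single leaf $l$. Otherwise: if $op = \mathrm{INS}$,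 choose a node $x$ of $X$ uniformly at random and replace it by a new node labelled $g$ whose two children are the subtree rooted at $x$ and a new leaf $l$, in uniformly random order; if $op = \mathrm{DEL}$, choose a node $x$ of $X$ (leaf or internal) uniformly at random and replace the parent of $x$ by the sibling of $x$; if $op = \mathrm{SUB}$, choose a leaf of $X$ uniformly at random and replace it by $l$. RLS-GP with tree size limit $\ell$: start with the empty tree $X$; in each iteration let $X' := $ HVL-Prime$(X)$, and if LeafCount$(X') \le \ell$ and $f(X') \le f(X)$ (sampled errors on the current training set) then set $X := X'$. $\lg$ is the base-2 logarithm; asymptotics are as $n \to \infty$. *)

From Stdlib Require Import Reals List Arith Lia.
Import ListNotations.
Open Scope R_scope.

(* Non-empty trees.  [Node true] = AND, [Node false] = OR  (F = {AND, OR});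
   [Leaf i] = literal x_{i+1}  (L = {x_1,...,x_n}, i < n). *)
Inductive ptree : Type :=
| Leaf (i : nat)
| Node (g : bool) (l r : ptree).

(* A program is a possibly empty tree: [None] is the empty tree. *)
Definition program := option ptree.

(* Inputs are bit lists of length n; x_{i+1} is [nth i x false]. *)
Fixpoint peval (t : ptree) (x : list bool) : bool :=
  match t with
  | Leaf i => nth i x false
  | Node g a b => if g then andb (peval a x) (peval b x)
                  else orb (peval a x) (peval b x)
  end.

Fixpoint nnodes (t : ptree) : nat :=
  match t with Leaf _ => 1%nat | Node _ a b => S (nnodes a + nnodes b) end.

Fixpoint nleaves (t : ptree) : nat :=
  match t with Leaf _ => 1%nat | Node _ a b => (nleaves a + nleaves b)%nat end.

Definition LeafCount (X : program) : nat :=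
  match X with None => 0%nat | Some t => nleaves t end.

(* Nodes are numbered in preorder (root = 0); [modify_at t k f] replaces the
   subtree rooted at node k by [f] of it. *)
Fixpoint modify_at (t : ptree) (k : nat) (f : ptree -> ptree) : ptree :=
  match k with
  | O => f t
  | S k' =>
      match t with
      | Leaf _ => t
      | Node g a b =>
          if Nat.ltb k' (nnodes a) then Node g (modify_at a k' f) b
          else Node g a (modify_at b (k' - nnodes a) f)
      end
  end.

(* Subtree deletion at node k: the parent of node k is replaced by the sibling
   of node k.  Deleting the root (which has no parent) yields the empty tree. *)
Fixpoint del_at (t : ptree) (k : nat) : program :=
  match k with
  | O => None
  | S k' =>
      match t with
      | Leaf _ => Some t
      | Node g a b =>
          if Nat.ltb k' (nnodes a) then
            match del_at a k' with None => Some b | Some a' => Some (Node g a' b) end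
          else
            match del_at b (k' - nnodes a) with None => Some a | Some b' => Some (Node g a b') end
      end
  end.

Fixpoint sub_leaf (t : ptree) (j l : nat) : ptree :=
  match t with
  | Leaf _ => Leaf l
  | Node g a b =>
      if Nat.ltb j (nleaves a) then Node g (sub_leaf a j l) b
      else Node g a (sub_leaf b (j - nleaves a) l)
  end.

Definition dist (A : Type) := list (R * A).
Definition ret {A} (a : A) : dist A := [(1, a)].
Definition bind {A B} (d : dist A) (f : A -> dist B) : dist B :=
  flat_map (fun pa => map (fun qb => (fst pa * fst qb, snd qb)) (f (snd pa))) d.
Definition unif {A} (l : list A) : dist A :=
  map (fun a => (/ INR (length l), a)) l.
Definition prob {A} (d : dist A) (P : A -> bool) : R :=
  fold_right (fun pa acc => if P (snd pa) then fst pa + acc else acc) 0 d.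

(* op: 0 = INS, 1 = DEL, 2 = SUB; literal l uniform in {0..n-1};
   g uniform in {AND, OR}. *)
Definition HVL_Prime (n : nat) (X : program) : dist program :=
  bind (unif [0%nat; 1%nat; 2%nat]) (fun op =>
  bind (unif (seq 0 n)) (fun l =>
  bind (unif [true; false]) (fun g =>
  match X with
  | None => ret (Some (Leaf l))
  | Some t =>
      match op with
      | O => bind (unif (seq 0 (nnodes t))) (fun k =>
             bind (unif [true; false]) (fun side =>
             ret (Some (modify_at t k (fun u =>
                    if side then Node g u (Leaf l) else Node g (Leaf l) u)))))
      | 1%nat => bind (unif (seq 0 (nnodes t))) (fun k => ret (del_at t k))
      | _ => bind (unif (seq 0 (nleaves t))) (fun j => ret (Some (sub_leaf t j l)))
      end
  end))).

Fixpoint all_inputs (n : nat) : list (list bool) :=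
  match n with
  | O => [[]]
  | S m => flat_map (fun v => [true :: v; false :: v]) (all_inputs m)
  end.

Fixpoint training_set (n s : nat) : dist (list (list bool)) :=
  match s with
  | O => ret []
  | S s' => bind (unif (all_inputs n)) (fun x =>
            bind (training_set n s') (fun S => ret (x :: S)))
  end.

Definition AND_n (n : nat) (x : list bool) : bool :=
  forallb (fun i => nth i x false) (seq 0 n).
Definition OR_n (n : nat) (x : list bool) : bool :=
  existsb (fun i => nth i x false) (seq 0 n).

(* Number of inputs in S on which X differs from h.  Convention: the empty
   tree computes no function and counts as wrong on every input. *)
Definition sampled_error (h : list bool -> bool) (X : program)
    (S : list (list bool)) : nat :=
  match X with
  | None => length S
  | Some t => length (filter (fun x => negb (Bool.eqb (peval t x) (h x))) S)
  end.

Definition gen_error (n : nat) (h : list bool -> bool) (X : program) : R :=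
  INR (sampled_error h X (all_inputs n)) / 2 ^ n.

Definition lg (x : R) : R := ln x / ln 2.

Definition ceilR (x : R) : Z := (- Int_part (- x))%Z.

Definition sample_size (n : nat) (c : R) : nat :=
  Z.to_nat (ceilR (Rpower (INR n) c * (lg (INR n)) ^ 2)).

Inductive state : Type :=
| Running (X : program)
| Done (X : program).

Definition rls_step (n ell s : nat) (c' : R) (h : list bool -> bool)
    (st : state) : dist state :=
  match st with
  | Done X => ret (Done X)
  | Running X =>
      bind (training_set n s) (fun S =>
        if Rle_dec (INR (sampled_error h X S)) (c' * lg (INR n)) then ret (Done X)
        else bind (HVL_Prime n X) (fun X' =>
          if andb (Nat.leb (LeafCount X') ell)
                  (Nat.leb (sampled_error h X' S) (sampled_error h X S))
          then ret (Running X') else ret (Running X)))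
  end.

Fixpoint rls_run (n ell s : nat) (c' : R) (h : list bool -> bool) (T : nat)
    : dist state :=
  match T with
  | O => ret (Running None)
  | S T' => bind (rls_run n ell s c' h T') (rls_step n ell s c' h)
  end.

Definition success (n : nat) (c : R) (h : list bool -> bool) (st : state) : bool :=
  match st with
  | Running _ => false
  | Done X => if Rle_dec (gen_error n h X) (Rpower (INR n) (- c)) then true else false
  end.

(* Call a tree clean for AND_n if it uses only AND gates and pairwise distinct literals (dually
   for OR_n). Starting from the empty tree, RLS-GP reaches a clean tree, and a clean tree with k
   leaves errs exactly when all its literals are 1 but some other one is 0, an event of
   probability at most 2^-k. As long as the sampled error is above c' lg n, with a training set of
   size s = n^c lg^2 n a Chernoff bound says that 2^-k is at least about lg n / s: then a mutation
   that makes a clean tree worse costs at least 2^-(k+1) of the inputs and is rejected w.h.p., a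
   substitution of a fresh literal is neutral, and inserting a fresh literal under an AND gate
   (probability at least 1/12) adds a leaf. Hence the potential 2^(ks - k), where 2^ks is about 4s,
   decreases by a constant factor per iteration in expectation, up to an additive failure term
   O(lg n / n); after O(lg n) iterations it is O(lg^2 n / n). Once the sampled error is small,
   the algorithm stops, and by Chernoff again the true error is then at most n^-c w.h.p. *)

From Pilot Require Import Defs.
From Stdlib Require Import Reals Lra Lia List Permutation Bool ListDec ZArith.
Import ListNotations.
Open Scope R_scope.

(** * Finite distributions *)

Definition expect {A} (d : Defs.dist A) (f : A -> R) : R :=
  fold_right (fun pa acc => fst pa * f (snd pa) + acc) 0 d.

Definition is_prob {A} (d : Defs.dist A) : Prop :=
  (forall pa, In pa d -> 0 <= fst pa) /\ expect d (fun _ => 1) = 1.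

Definition sumf {A} (l : list A) (f : A -> R) : R :=
  fold_right (fun a acc => f a + acc) 0 l.

Lemma expect_app {A} (d1 d2 : Defs.dist A) f :
  expect (d1 ++ d2) f = expect d1 f + expect d2 f.
Proof. induction d1 as [|[w a] d1 IH]; simpl; [lra|]. rewrite IH; lra. Qed.

Lemma expect_bind {A B} (d : Defs.dist A) (g : A -> Defs.dist B) f :
  expect (bind d g) f = expect d (fun a => expect (g a) f).
Proof.
  assert (Hscale : forall (e : Defs.dist B) w,
    expect (map (fun qb => (w * fst qb, snd qb)) e) f = w * expect e f).
  { intros e w. induction e as [|[v b] e IH]; simpl; [lra|]. rewrite IH; lra. }
  induction d as [|[w a] d IH]; [reflexivity|].
  unfold bind in *. simpl. rewrite expect_app, Hscale, IH. reflexivity.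
Qed.

Lemma expect_ret {A} (a : A) f : expect (ret a) f = f a.
Proof. simpl; lra. Qed.

Lemma expect_unif {A} (l : list A) f : expect (unif l) f = / INR (length l) * sumf l f.
Proof.
  unfold unif. generalize (/ INR (length l)). intro w.
  induction l as [|a l IH]; simpl; [lra|]. rewrite IH. lra.
Qed.

Lemma expect_ext_in {A} (d : Defs.dist A) f g :
  (forall pa, In pa d -> f (snd pa) = g (snd pa)) -> expect d f = expect d g.
Proof.
  intro H. induction d as [|[w a] d IH]; [reflexivity|]. simpl.
  pose proof (H (w, a) (or_introl eq_refl)) as Ha; simpl in Ha.
  rewrite Ha, IH; auto.
  intros; apply H; right; auto.
Qed.

Lemma expect_ext {A} (d : Defs.dist A) f g : (forall a, f a = g a) -> expect d f = expect d g.
Proof. intro H. apply expect_ext_in. auto. Qed.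

Lemma expect_plus {A} (d : Defs.dist A) f g :
  expect d (fun a => f a + g a) = expect d f + expect d g.
Proof. induction d as [|[w a] d IH]; simpl; [lra|]. rewrite IH; lra. Qed.

Lemma expect_scal {A} (d : Defs.dist A) c f : expect d (fun a => c * f a) = c * expect d f.
Proof. induction d as [|[w a] d IH]; simpl; [lra|]. rewrite IH; lra. Qed.

Lemma expect_opp {A} (d : Defs.dist A) f : expect d (fun a => - f a) = - expect d f.
Proof. induction d as [|[w a] d IH]; simpl; [lra|]. rewrite IH; lra. Qed.

Lemma expect_const {A} (d : Defs.dist A) c : is_prob d -> expect d (fun _ => c) = c.
Proof.
  intros [_ H1]. transitivity (c * expect d (fun _ => 1)); [|rewrite H1; lra].
  rewrite <- expect_scal. apply expect_ext. intros; lra.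
Qed.

Lemma expect_le {A} (d : Defs.dist A) f g : is_prob d ->
  (forall pa, In pa d -> f (snd pa) <= g (snd pa)) -> expect d f <= expect d g.
Proof.
  intros [Hw _] H. induction d as [|[w a] d IH]; simpl; [lra|].
  assert (0 <= w) by (apply (Hw (w, a)); left; auto).
  assert (f a <= g a) by (apply (H (w, a)); left; auto).
  assert (expect d f <= expect d g) by (apply IH; intros; [apply Hw|apply H]; right; auto).
  simpl in *. nra.
Qed.

Lemma expect_le_const {A} (d : Defs.dist A) f c : is_prob d ->
  (forall pa, In pa d -> f (snd pa) <= c) -> expect d f <= c.
Proof. intros Hd H. rewrite <- (expect_const d c Hd). apply expect_le; auto. Qed.

Lemma expect_nonneg {A} (d : Defs.dist A) f : is_prob d -> (forall a, 0 <= f a) -> 0 <= expect d f.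
Proof. intros Hd H. rewrite <- (expect_const d 0 Hd). apply expect_le; auto. Qed.

Lemma expect_swap {A B} (d1 : Defs.dist A) (d2 : Defs.dist B) f :
  expect d1 (fun a => expect d2 (fun b => f a b)) =
  expect d2 (fun b => expect d1 (fun a => f a b)).
Proof.
  induction d1 as [|[w a] d1 IH]; simpl.
  - symmetry. induction d2 as [|[v b] d2 IH2]; simpl; [|rewrite IH2]; lra.
  - rewrite IH, <- expect_scal, <- expect_plus. reflexivity.
Qed.

Lemma prob_expect {A} (d : Defs.dist A) P : prob d P = expect d (fun a => if P a then 1 else 0).
Proof.
  induction d as [|[w a] d IH]; simpl; [lra|]. rewrite IH. destruct (P a); lra.
Qed.

Lemma In_bind {A B} (d : Defs.dist A) (g : A -> Defs.dist B) pb : In pb (bind d g) ->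
  exists pa, In pa d /\ exists pc, In pc (g (snd pa)) /\ snd pb = snd pc.
Proof.
  intro H. unfold bind in H. apply in_flat_map in H.
  destruct H as [pa [Hin H]]. apply in_map_iff in H. destruct H as [pc [<- Hc]].
  exists pa; split; auto. exists pc; split; auto.
Qed.

Lemma In_unif {A} (l : list A) pa : In pa (unif l) -> In (snd pa) l.
Proof. unfold unif. intro H. apply in_map_iff in H. destruct H as [x [<- H]]. auto. Qed.

Lemma is_prob_ret {A} (a : A) : is_prob (ret a).
Proof. split; [intros pa [<-|[]]|]; simpl; lra. Qed.

Lemma sumf_const {A} (l : list A) c : sumf l (fun _ => c) = INR (length l) * c.
Proof. induction l; simpl length; [simpl; lra|]. rewrite S_INR. simpl. rewrite IHl. lra. Qed.

Lemma is_prob_unif {A} (l : list A) : l <> [] -> is_prob (unif l).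
Proof.
  intro Hl. assert (Hlen : 0 < INR (length l)).
  { apply lt_0_INR. destruct l; [congruence|simpl; lia]. }
  split.
  - intros pa H. unfold unif in H. apply in_map_iff in H. destruct H as [x [<- _]].
    simpl. left. apply Rinv_0_lt_compat; auto.
  - rewrite expect_unif, sumf_const. field. lra.
Qed.

Lemma is_prob_bind {A B} (d : Defs.dist A) (g : A -> Defs.dist B) : is_prob d ->
  (forall pa, In pa d -> is_prob (g (snd pa))) -> is_prob (bind d g).
Proof.
  intros [Hw Hm] Hg. split.
  - intros pb H. unfold bind in H. apply in_flat_map in H.
    destruct H as [[w a] [Hin H]]. apply in_map_iff in H. destruct H as [[v b] [<- Hb]].
    simpl. apply Rmult_le_pos; [apply (Hw _ Hin)|apply (proj1 (Hg _ Hin) _ Hb)].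
  - rewrite expect_bind. transitivity (expect d (fun _ => 1)); [|exact Hm].
    apply expect_ext_in. intros pa Hpa. apply (Hg _ Hpa).
Qed.

Lemma expect_unif_le {A} (l : list A) f C : l <> [] -> (forall a, In a l -> f a <= C) ->
  expect (unif l) f <= C.
Proof.
  intros Hl H. apply expect_le_const; [apply is_prob_unif; auto|].
  intros pa Hp. apply H, In_unif, Hp.
Qed.

(** * Uniformly random inputs *)

Definition b2R (b : bool) : R := if b then 1 else 0.

Definition input_mean (n : nat) (f : list bool -> R) : R := expect (unif (all_inputs n)) f.

Definition input_prob (n : nat) (P : list bool -> bool) : R := input_mean n (fun x => b2R (P x)).

Lemma all_inputs_length n : length (all_inputs n) = (2 ^ n)%nat.
Proof.
  assert (Hdouble : forall l : list (list bool),
    length (flat_map (fun v => [true :: v; false :: v]) l) = (2 * length l)%nat).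
  { induction l; simpl; auto. rewrite IHl. lia. }
  induction n; simpl; auto. rewrite Hdouble, IHn. lia.
Qed.

Lemma is_prob_inputs n : is_prob (unif (all_inputs n)).
Proof.
  apply is_prob_unif. intro H. pose proof (all_inputs_length n) as Hl.
  rewrite H in Hl. pose proof (Nat.pow_nonzero 2 n). simpl in Hl. lia.
Qed.

Lemma input_mean_0 f : input_mean 0 f = f [].
Proof. unfold input_mean. rewrite expect_unif. simpl. lra. Qed.

Lemma input_mean_S m f : input_mean (S m) f =
  / 2 * (input_mean m (fun v => f (true :: v)) + input_mean m (fun v => f (false :: v))).
Proof.
  unfold input_mean. rewrite !expect_unif, !all_inputs_length. simpl all_inputs.
  assert (Hsplit : forall l, sumf (flat_map (fun v => [true :: v; false :: v]) l) f =
    sumf l (fun v => f (true :: v)) + sumf l (fun v => f (false :: v))).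
  { induction l; simpl; [lra|]. rewrite IHl. lra. }
  rewrite Hsplit, Nat.pow_succ_r', mult_INR.
  assert (0 < INR (2 ^ m)) by (apply lt_0_INR, Nat.neq_0_lt_0, Nat.pow_nonzero; lia).
  simpl (INR 2). field. lra.
Qed.

Lemma input_mean_le n f g : (forall x, f x <= g x) -> input_mean n f <= input_mean n g.
Proof. intros. apply expect_le; auto. apply is_prob_inputs. Qed.

Lemma input_prob_bounds n P : 0 <= input_prob n P <= 1.
Proof.
  split.
  - apply expect_nonneg; [apply is_prob_inputs|]. intro; unfold b2R; destruct (P a); lra.
  - apply expect_le_const; [apply is_prob_inputs|]. intros; unfold b2R; destruct (P _); lra.
Qed.

Lemma sumf_b2R {A} (l : list A) P : sumf l (fun x => b2R (P x)) = INR (length (filter P l)).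
Proof.
  induction l; simpl; auto. rewrite IHl. unfold b2R. destruct (P a); [|lra].
  simpl length. rewrite S_INR. lra.
Qed.

Lemma length_filter_seq (f : nat -> bool) n Q : NoDup Q -> (forall j, In j Q -> (j < n)%nat) ->
  (forall j, (j < n)%nat -> (f j = true <-> In j Q)) -> length (filter f (seq 0 n)) = length Q.
Proof.
  intros HQ Hlt Hf. apply Permutation_length, NoDup_Permutation; auto.
  - apply NoDup_filter, seq_NoDup.
  - intro j. rewrite filter_In, in_seq. split.
    + intros [H1 H2]. apply Hf; auto; lia.
    + intro H. pose proof (Hlt j H). split; [lia|]. apply Hf; auto.
Qed.

(* A partial assignment [rho] fixes bit [j] to [v] when [rho j = Some v]. *)
Definition agrees (rho : nat -> option bool) (n : nat) (x : list bool) : bool :=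
  forallb (fun j => match rho j with Some v => Bool.eqb (nth j x false) v | None => true end)
    (seq 0 n).

Definition nfixed (rho : nat -> option bool) (n : nat) : nat :=
  length (filter (fun j => match rho j with Some _ => true | None => false end) (seq 0 n)).

Lemma agrees_cons rho m c v : agrees rho (S m) (c :: v) =
  match rho 0%nat with Some b => Bool.eqb c b | None => true end &&
  agrees (fun j => rho (S j)) m v.
Proof.
  unfold agrees. simpl. f_equal. rewrite <- seq_shift.
  induction (seq 0 m); simpl; auto. rewrite IHl. reflexivity.
Qed.

Lemma nfixed_S rho m : nfixed rho (S m) =
  ((match rho 0%nat with Some _ => 1 | None => 0 end) + nfixed (fun j => rho (S j)) m)%nat.
Proof.
  unfold nfixed. simpl. rewrite <- seq_shift, filter_map_swap.
  destruct (rho 0%nat); simpl; rewrite length_map; reflexivity.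
Qed.

Lemma input_prob_agrees n : forall rho, input_prob n (agrees rho n) = (/ 2) ^ (nfixed rho n).
Proof.
  unfold input_prob. induction n; intro rho.
  - rewrite input_mean_0. reflexivity.
  - rewrite input_mean_S, nfixed_S.
    assert (Hc : forall c, input_mean n (fun v => b2R (agrees rho (S n) (c :: v))) =
      b2R (match rho 0%nat with Some b => Bool.eqb c b | None => true end) *
      (/ 2) ^ nfixed (fun j => rho (S j)) n).
    { intro c. rewrite <- IHn. unfold input_mean. rewrite <- expect_scal. apply expect_ext.
      intro v. rewrite agrees_cons. unfold b2R.
      destruct (match rho 0%nat with Some b => Bool.eqb c b | None => true end),
        (agrees (fun j => rho (S j)) n v); simpl; lra. }
    rewrite !Hc, pow_add. unfold b2R. destruct (rho 0%nat) as [[]|]; simpl; lra.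
Qed.

Lemma agrees_spec rho n x : agrees rho n x = true <->
  forall j v, (j < n)%nat -> rho j = Some v -> nth j x false = v.
Proof.
  unfold agrees. rewrite forallb_forall. split.
  - intros H j v Hj Hr. specialize (H j). rewrite in_seq, Hr in H.
    apply Bool.eqb_prop, H. lia.
  - intros H j Hj. rewrite in_seq in Hj. destruct (rho j) eqn:Hr; auto.
    rewrite (H j b) by (auto; lia). apply eqb_reflx.
Qed.

Lemma nfixed_eq_length rho n Q : NoDup Q -> (forall j, In j Q -> (j < n)%nat) ->
  (forall j, (j < n)%nat -> (rho j <> None <-> In j Q)) -> nfixed rho n = length Q.
Proof.
  intros H1 H2 H3. apply length_filter_seq; auto. intros j Hj. rewrite <- H3 by auto.
  destruct (rho j); split; congruence.
Qed.

Definition fix_on (D : list nat) (val : nat -> bool) (j : nat) : option bool :=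
  if in_dec Nat.eq_dec j D then Some (val j) else None.

Lemma input_prob_fix_on n D val : NoDup D -> (forall j, In j D -> (j < n)%nat) ->
  input_prob n (agrees (fix_on D val) n) = (/ 2) ^ length D.
Proof.
  intros HD Hlt. rewrite input_prob_agrees, (nfixed_eq_length _ n D); auto.
  intros j _. unfold fix_on. destruct (in_dec _ _ _); split; congruence || tauto.
Qed.

Lemma agrees_fix_on n D val x : (forall j, In j D -> (j < n)%nat) ->
  (agrees (fix_on D val) n x = true <-> forall j, In j D -> nth j x false = val j).
Proof.
  intro Hlt. rewrite agrees_spec. unfold fix_on. split.
  - intros H j Hj. apply H; auto. destruct (in_dec _ _ _); tauto.
  - intros H j v _. destruct (in_dec _ _ _) as [Hj|]; [|discriminate].
    intro Hv; injection Hv as <-. auto.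
Qed.

(** * Training sets *)

Definition nhits (P : list bool -> bool) (S : list (list bool)) : nat := length (filter P S).

Lemma is_prob_training_set n s : is_prob (training_set n s).
Proof.
  induction s; cbn [training_set]; [apply is_prob_ret|].
  apply is_prob_bind; [apply is_prob_inputs|]. intros.
  apply is_prob_bind; auto. intros; apply is_prob_ret.
Qed.

Lemma training_set_length n s pa : In pa (training_set n s) -> length (snd pa) = s.
Proof.
  revert pa. induction s; simpl; intros pa H.
  - destruct H as [<-|[]]; auto.
  - apply In_bind in H. destruct H as [pb [_ [pc [Hc ->]]]].
    apply In_bind in Hc. destruct Hc as [pd [Hd [pe [[<-|[]] ->]]]]. simpl.
    rewrite (IHs pd Hd). auto.
Qed.

Lemma expect_pow_nhits n s P z :
  expect (training_set n s) (fun S => z ^ nhits P S) = (1 + (z - 1) * input_prob n P) ^ s.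
Proof.
  assert (Hone : input_mean n (fun x => if P x then z else 1) = 1 + (z - 1) * input_prob n P).
  { unfold input_prob, input_mean. rewrite <- expect_scal.
    rewrite <- (expect_const _ 1 (is_prob_inputs n)) at 1. rewrite <- expect_plus.
    apply expect_ext. intro x. unfold b2R. destruct (P x); lra. }
  rewrite <- Hone. induction s; [simpl; lra|].
  cbn [training_set]. rewrite expect_bind, <- tech_pow_Rmult, <- IHs.
  unfold input_mean. rewrite Rmult_comm, <- expect_scal. apply expect_ext. intro x.
  rewrite expect_bind, Rmult_comm, <- expect_scal. apply expect_ext. intro S.
  rewrite expect_ret. unfold nhits. simpl. destruct (P x); simpl; lra.
Qed.

Lemma exp_pow x k : exp x ^ k = exp (INR k * x).
Proof.
  induction k; simpl; [rewrite Rmult_0_l, exp_0; auto|].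
  rewrite IHk, <- exp_plus. f_equal. destruct k; simpl; lra.
Qed.

Lemma pow_le_exp y k : 0 <= 1 + y -> (1 + y) ^ k <= exp (INR k * y).
Proof. intro H. rewrite <- exp_pow. apply pow_incr. split; auto. apply exp_ineq1_le. Qed.

Lemma exp_le x y : x <= y -> exp x <= exp y.
Proof. intro H. destruct (Req_dec x y) as [->|]; [lra|left; apply exp_increasing; lra]. Qed.

Lemma expect_nhits_zero n s P :
  expect (training_set n s) (fun S => b2R (Nat.eqb (nhits P S) 0))
    <= exp (- (INR s * input_prob n P)).
Proof.
  pose proof (input_prob_bounds n P).
  replace (- (INR s * input_prob n P)) with (INR s * (- input_prob n P)) by lra.
  eapply Rle_trans; [|apply pow_le_exp; lra].
  replace (1 + - input_prob n P) with (1 + (0 - 1) * input_prob n P) by lra.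
  rewrite <- expect_pow_nhits. apply Req_le, expect_ext. intro S.
  destruct (nhits P S); simpl; unfold b2R; simpl; lra.
Qed.

(* Chernoff-type bounds, from the moment generating function at [z = e] and [z = 1/e]. *)
Lemma expect_nhits_gt n s P a :
  expect (training_set n s) (fun S => if Rle_dec (INR (nhits P S)) a then 0 else 1)
    <= exp (2 * INR s * input_prob n P - a).
Proof.
  pose proof (input_prob_bounds n P) as Hq.
  apply Rle_trans with (expect (training_set n s) (fun S => exp (- a) * exp 1 ^ nhits P S)).
  { apply expect_le; [apply is_prob_training_set|]. intros [w S] _. simpl.
    rewrite exp_pow, <- exp_plus.
    destruct (Rle_dec _ _); [left; apply exp_pos|].
    apply Rle_trans with (exp 0); [rewrite exp_0; lra|apply exp_le; lra]. }
  rewrite expect_scal, expect_pow_nhits.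
  pose proof exp_le_3. pose proof (exp_ineq1_le 1).
  apply Rle_trans with (exp (- a) * exp (INR s * (2 * input_prob n P))).
  { apply Rmult_le_compat_l; [left; apply exp_pos|].
    apply Rle_trans with ((1 + 2 * input_prob n P) ^ s); [apply pow_incr; nra|].
    apply pow_le_exp. lra. }
  rewrite <- exp_plus. apply exp_le. lra.
Qed.

Lemma expect_nhits_le n s P a :
  expect (training_set n s) (fun S => if Rle_dec (INR (nhits P S)) a then 1 else 0)
    <= exp (a - INR s * input_prob n P / 2).
Proof.
  pose proof (input_prob_bounds n P) as Hq.
  apply Rle_trans with (expect (training_set n s) (fun S => exp a * exp (-1) ^ nhits P S)).
  { apply expect_le; [apply is_prob_training_set|]. intros [w S] _. simpl.
    rewrite exp_pow, <- exp_plus.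
    destruct (Rle_dec _ _); [|left; apply exp_pos].
    apply Rle_trans with (exp 0); [rewrite exp_0; lra|apply exp_le; lra]. }
  rewrite expect_scal, expect_pow_nhits.
  assert (exp (-1) <= / 2).
  { replace (-1) with (- (1)) by lra. rewrite exp_Ropp. apply Rinv_le_contravar; [lra|].
    pose proof (exp_ineq1_le 1). lra. }
  pose proof (exp_pos (-1)).
  apply Rle_trans with (exp a * exp (INR s * (- input_prob n P / 2))).
  { apply Rmult_le_compat_l; [left; apply exp_pos|].
    apply Rle_trans with ((1 + - input_prob n P / 2) ^ s); [apply pow_incr; nra|].
    apply pow_le_exp. lra. }
  rewrite <- exp_plus. apply exp_le. lra.
Qed.

(** * Trees *)

Fixpoint leaves (t : ptree) : list nat :=
  match t with Leaf i => [i] | Node _ a c => leaves a ++ leaves c end.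

Fixpoint all_gates (b : bool) (t : ptree) : Prop :=
  match t with Leaf _ => True | Node g a c => g = b /\ all_gates b a /\ all_gates b c end.

Definition all_set (b : bool) (l : list nat) (x : list bool) : Prop :=
  forall j, In j l -> nth j x false = b.

Lemma nleaves_leaves t : nleaves t = length (leaves t).
Proof. induction t; simpl; auto. rewrite length_app; lia. Qed.

Lemma leaves_nonnil t : leaves t <> [].
Proof.
  induction t; simpl; [discriminate|]. destruct (leaves t1); simpl; [auto|discriminate].
Qed.

Lemma nleaves_pos t : (1 <= nleaves t)%nat.
Proof.
  rewrite nleaves_leaves. pose proof (leaves_nonnil t).
  destruct (leaves t); [congruence|simpl; lia].
Qed.

Lemma nnodes_pos t : (1 <= nnodes t)%nat.
Proof. destruct t; simpl; lia. Qed.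

Lemma all_set_app b l1 l2 x : all_set b (l1 ++ l2) x <-> all_set b l1 x /\ all_set b l2 x.
Proof.
  unfold all_set. split.
  - intro H; split; intros; apply H; apply in_or_app; auto.
  - intros [H1 H2] j Hj; apply in_app_or in Hj; destruct Hj; auto.
Qed.

Lemma peval_node_same b a c x : peval (Node b a c) x = b <-> peval a x = b /\ peval c x = b.
Proof. simpl. destruct b, (peval a x), (peval c x); simpl; intuition congruence. Qed.

Lemma peval_node_dual b a c x :
  peval (Node (negb b) a c) x = b <-> peval a x = b \/ peval c x = b.
Proof. simpl. destruct b, (peval a x), (peval c x); simpl; intuition congruence. Qed.

Lemma peval_all_gates b t x : all_gates b t -> (peval t x = b <-> all_set b (leaves t) x).
Proof.
  induction t as [i|g a IHa c IHc].
  - intros _. unfold all_set. simpl. split; [intros H j [<-|[]]; auto|intro H; apply H; auto].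
  - intros [-> [Ha Hc]]. rewrite peval_node_same, IHa, IHc by auto. simpl.
    rewrite all_set_app. tauto.
Qed.

Lemma modify_at_leaves b t k : (k < nnodes t)%nat -> exists u pre suf,
  leaves t = pre ++ leaves u ++ suf /\ (all_gates b t -> all_gates b u) /\
  forall f, leaves (modify_at t k f) = pre ++ leaves (f u) ++ suf /\
    (all_gates b t -> all_gates b (f u) -> all_gates b (modify_at t k f)) /\
    (all_gates b t -> forall x, peval (modify_at t k f) x = b <->
        all_set b (pre ++ suf) x /\ peval (f u) x = b).
Proof.
  revert k. induction t as [i|g a IHa c IHc]; intros [|k] Hk.
  1, 3: eexists _, [], []; cbn [app]; rewrite app_nil_r; split; [reflexivity|];
    split; [tauto|]; intro f; cbn [modify_at]; rewrite app_nil_r;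
    split; [reflexivity|]; split; [tauto|]; intros _ x; unfold all_set; simpl; tauto.
  - simpl in Hk. lia.
  - simpl in Hk. cbn [modify_at]. destruct (Nat.ltb k (nnodes a)) eqn:Hlt.
    + apply Nat.ltb_lt in Hlt. destruct (IHa k Hlt) as [u [pre [suf [H1 [H2 H3]]]]].
      exists u, pre, (suf ++ leaves c).
      split; [cbn [leaves]; rewrite H1, <- !app_assoc; reflexivity|]. split;
      [intros [_ [Ha _]]; auto|].
      intro f. destruct (H3 f) as [F1 [F2 F3]]. cbn [leaves]. rewrite F1, <- !app_assoc.
      split; [reflexivity|]. split; [intros [Hg [Ha Hc]] Hf; simpl; auto|].
      intros [<- [Ha Hc]] x. rewrite peval_node_same, F3, (peval_all_gates g c x Hc) by auto.
      rewrite app_assoc, !all_set_app. tauto.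
    + apply Nat.ltb_ge in Hlt.
      destruct (IHc (k - nnodes a)%nat ltac:(lia)) as [u [pre [suf [H1 [H2 H3]]]]].
      exists u, (leaves a ++ pre), suf.
      split; [cbn [leaves]; rewrite H1, <- !app_assoc; reflexivity|]. split;
      [intros [_ [_ Hc]]; auto|].
      intro f. destruct (H3 f) as [F1 [F2 F3]]. cbn [leaves]. rewrite F1, <- !app_assoc.
      split; [reflexivity|]. split; [intros [Hg [Ha Hc]] Hf; simpl; auto|].
      intros [<- [Ha Hc]] x. rewrite peval_node_same, F3, (peval_all_gates g a x Ha) by auto.
      rewrite !all_set_app. tauto.
Qed.

Lemma del_at_leaves b t k : (1 <= k < nnodes t)%nat -> all_gates b t ->
  exists t' u pre suf, del_at t k = Some t' /\ leaves t = pre ++ leaves u ++ suf /\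
    leaves t' = pre ++ suf /\ all_gates b t'.
Proof.
  revert k. induction t as [i|g a IHa c IHc]; intros [|k] Hk Hm; simpl in Hk; try lia.
  destruct Hm as [Hg [Ha Hc]]. simpl. destruct (Nat.ltb k (nnodes a)) eqn:Hlt.
  - apply Nat.ltb_lt in Hlt. destruct k as [|k].
    + exists c, a, [], (leaves c). destruct a; repeat split; auto.
    + destruct (IHa (S k) ltac:(lia) Ha) as [t' [u [pre [suf [D1 [D2 [D3 D4]]]]]]].
      rewrite D1. exists (Node g t' c), u, pre, (suf ++ leaves c).
      simpl. rewrite D2, D3, <- !app_assoc. repeat split; auto.
  - apply Nat.ltb_ge in Hlt. destruct (Nat.eq_dec (k - nnodes a) 0) as [E0|E0].
    + rewrite E0. exists a, c, (leaves a), []. rewrite !app_nil_r. destruct c; repeat split; auto.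
    + destruct (IHc (k - nnodes a)%nat ltac:(lia) Hc) as [t' [u [pre [suf [D1 [D2 [D3 D4]]]]]]].
      rewrite D1. exists (Node g a t'), u, (leaves a ++ pre), suf.
      simpl. rewrite D2, D3, <- !app_assoc. repeat split; auto.
Qed.

Lemma sub_leaf_leaves b t j l : exists pre y suf, leaves t = pre ++ y :: suf /\
  leaves (sub_leaf t j l) = pre ++ l :: suf /\ (all_gates b t -> all_gates b (sub_leaf t j l)).
Proof.
  revert j. induction t as [i|g a IHa c IHc]; intro j.
  - exists [], i, []. simpl. auto.
  - simpl. destruct (Nat.ltb j (nleaves a)).
    + destruct (IHa j) as [pre [y [suf [H1 [H2 H3]]]]].
      exists pre, y, (suf ++ leaves c). simpl. rewrite H1, H2, <- !app_assoc.
      repeat split; auto; tauto.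
    + destruct (IHc (j - nleaves a)%nat) as [pre [y [suf [H1 [H2 H3]]]]].
      exists (leaves a ++ pre), y, suf. simpl. rewrite H1, H2, <- !app_assoc.
      repeat split; auto; tauto.
Qed.

(** * Clean trees and their mutations *)

Definition target (b : bool) (n : nat) : list bool -> bool := if b then AND_n n else OR_n n.

Definition errs (h : list bool -> bool) (X : program) (x : list bool) : bool :=
  match X with None => true | Some t => negb (Bool.eqb (peval t x) (h x)) end.

Definition clean (b : bool) (n : nat) (t : ptree) : Prop :=
  all_gates b t /\ NoDup (leaves t) /\ forall j, In j (leaves t) -> (j < n)%nat.

Definition graft (g : bool) (l : nat) (side : bool) (u : ptree) : ptree :=
  if side then Node g u (Leaf l) else Node g (Leaf l) u.

Definition worse_by (n : nat) (h : list bool -> bool) (X X' : program) (w : R) : Prop :=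
  exists W, w <= input_prob n W /\
    (forall x, errs h X x = true -> errs h X' x = true) /\
    (forall x, W x = true -> errs h X' x = true /\ errs h X x = false).

Lemma all_gates_dec b t : {all_gates b t} + {~ all_gates b t}.
Proof.
  induction t as [i|g a IHa c IHc]; simpl; [left; exact I|].
  destruct (bool_dec g b), IHa, IHc; solve [left; auto | right; tauto].
Qed.

Lemma clean_dec b n t : {clean b n t} + {~ clean b n t}.
Proof.
  unfold clean. destruct (all_gates_dec b t) as [Ha|Ha]; [|right; tauto].
  destruct (NoDup_dec Nat.eq_dec (leaves t)) as [Hd|Hd]; [|right; tauto].
  destruct (Forall_dec (fun j => (j < n)%nat) (fun j => lt_dec j n) (leaves t)) as [Hl|Hl];
    rewrite Forall_forall in Hl; [left|right]; tauto.
Qed.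

Lemma target_spec b n x : target b n x = b <-> forall j, (j < n)%nat -> nth j x false = b.
Proof.
  destruct b; unfold target, AND_n, OR_n.
  - rewrite forallb_forall. split; intros H j Hj; apply H; rewrite in_seq in *; lia.
  - rewrite <- Bool.not_true_iff_false, existsb_exists. split.
    + intros H j Hj. apply Bool.not_true_iff_false. intro Hx. apply H.
      exists j. rewrite in_seq. split; [lia|auto].
    + intros H [j [Hj Hx]]. rewrite in_seq in Hj. rewrite H in Hx by lia. discriminate.
Qed.

Lemma nleaves_clean_le b n t : clean b n t -> (nleaves t <= n)%nat.
Proof.
  intros [_ [Hd Hlt]]. rewrite nleaves_leaves, <- (length_seq n 0).
  apply NoDup_incl_length; auto. intros j Hj. rewrite in_seq. specialize (Hlt j Hj). lia.
Qed.

Lemma peval_clean b n t x : clean b n t -> target b n x = b -> peval t x = b.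
Proof.
  intros [Hm [_ Hl]] Hh. apply (peval_all_gates b t x Hm). intros j Hj.
  apply (proj1 (target_spec b n x) Hh). auto.
Qed.

Lemma errs_clean b n t x : clean b n t ->
  (errs (target b n) (Some t) x = true <-> peval t x = b /\ target b n x = negb b).
Proof.
  intro Hc. simpl. pose proof (peval_clean b n t x Hc).
  destruct (peval t x), (target b n x), b; simpl in *; split; intuition congruence.
Qed.

Lemma sampled_error_nhits h X S : sampled_error h X S = nhits (errs h X) S.
Proof.
  destruct X; unfold nhits; simpl; auto.
  induction S; simpl; congruence.
Qed.

Lemma gen_error_input_prob n h X : gen_error n h X = input_prob n (errs h X).
Proof.
  unfold gen_error, input_prob, input_mean.
  rewrite expect_unif, sumf_b2R, sampled_error_nhits, all_inputs_length, pow_INR.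
  unfold nhits, Rdiv. simpl (INR 2). apply Rmult_comm.
Qed.

Lemma nhits_mono (P Q : list bool -> bool) S :
  (forall x, P x = true -> Q x = true) -> (nhits P S <= nhits Q S)%nat.
Proof.
  intro H. unfold nhits. induction S; simpl; auto. specialize (H a).
  destruct (P a), (Q a); simpl; try lia.
Qed.

Lemma nhits_add_le h X X' W S :
  (forall x, errs h X x = true -> errs h X' x = true) ->
  (forall x, W x = true -> errs h X' x = true /\ errs h X x = false) ->
  (nhits (errs h X) S + nhits W S <= nhits (errs h X') S)%nat.
Proof.
  intros H1 H2. unfold nhits. induction S as [|x S IH]; simpl; auto.
  specialize (H1 x). specialize (H2 x).
  destruct (errs h X x), (W x), (errs h X' x); simpl; try lia;
    first [destruct (H2 eq_refl); discriminate | discriminate (H1 eq_refl)].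
Qed.

(* An error of a clean tree sets all its leaves to [b]. *)
Lemma error_prob_clean_le b n t : clean b n t ->
  input_prob n (errs (target b n) (Some t)) <= (/ 2) ^ nleaves t.
Proof.
  intro Hc. pose proof Hc as [Hm [Hnd Hlt]].
  rewrite nleaves_leaves, <- (input_prob_fix_on n (leaves t) (fun _ => b)) by auto.
  apply input_mean_le. intro x. unfold b2R.
  destruct (errs _ _ x) eqn:Ex; [|destruct (agrees _ _ _); lra].
  replace (agrees _ n x) with true; [lra|]. symmetry. apply agrees_fix_on; auto.
  apply (peval_all_gates b t x Hm), (errs_clean b n t x Hc), Ex.
Qed.

Lemma pow_half_le m m' : (m <= m')%nat -> (/ 2) ^ m' <= (/ 2) ^ m.
Proof.
  intro H. rewrite !pow_inv. apply Rinv_le_contravar;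
  [apply pow_lt; lra|apply Rle_pow; [lra|exact H]].
Qed.

Lemma not_b_iff b c : c <> b <-> c = negb b.
Proof. destruct b, c; simpl; intuition congruence. Qed.

(* The witnesses: inputs that set some leaf of [u] to [negb b] and the literals [L] and all
   leaves outside [u] to [b]; the clean tree and the target both output [negb b] on them. *)
Lemma witness_set b n t u pre suf L : clean b n t -> leaves t = pre ++ leaves u ++ suf ->
  NoDup (L ++ leaves t) -> (forall j, In j L -> (j < n)%nat) ->
  exists W, (/ 2) ^ (length L + nleaves t) <= input_prob n W /\
    forall x, W x = true -> errs (target b n) (Some t) x = false /\
      all_set b (L ++ pre ++ suf) x /\ target b n x = negb b.
Proof.
  intros Hc Ht Hnd HL. pose proof Hc as [Hm [_ Hlt]].
  destruct (leaves u) as [|i0 rest] eqn:Hu; [destruct (leaves_nonnil u Hu)|].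
  set (D := i0 :: L ++ pre ++ suf).
  assert (HD : NoDup D).
  { apply (NoDup_app_remove_r _ rest), (Permutation_NoDup (l := L ++ leaves t)); auto.
    unfold D. rewrite Ht. simpl. rewrite (app_assoc L pre). symmetry. apply Permutation_cons_app.
    rewrite <- !app_assoc. apply Permutation_app_head, Permutation_app_head, Permutation_app_comm. }
  assert (HDn : forall j, In j D -> (j < n)%nat).
  { intros j [<-|Hj]; [|rewrite in_app_iff in Hj; destruct Hj as [Hj|Hj]; [auto|]];
      apply Hlt; rewrite Ht, !in_app_iff in *; simpl; tauto. }
  set (val := fun j => if Nat.eqb j i0 then negb b else b).
  exists (agrees (fix_on D val) n). split.
  - rewrite input_prob_fix_on by auto. apply pow_half_le.
    rewrite nleaves_leaves, Ht. unfold D. simpl. rewrite !length_app. simpl. rewrite length_app.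
    lia.
  - intros x Hx. rewrite (agrees_fix_on n D val x HDn) in Hx.
    assert (Hi0 : nth i0 x false = negb b).
    { rewrite (Hx i0 (or_introl eq_refl)). unfold val. rewrite Nat.eqb_refl. auto. }
    assert (Hi0t : In i0 (leaves t)) by (rewrite Ht; apply in_or_app; right; left; auto).
    assert (Hrest : all_set b (L ++ pre ++ suf) x).
    { intros j Hj. rewrite (Hx j (or_intror Hj)). unfold val. destruct (Nat.eqb_spec j i0); auto.
      subst. inversion HD. contradiction. }
    assert (Htarget : target b n x = negb b).
    { apply not_b_iff. rewrite target_spec. intro H. rewrite H in Hi0 by auto.
      destruct b; discriminate. }
    assert (Hpeval : peval t x = negb b).
    { apply not_b_iff. rewrite (peval_all_gates b t x Hm). intro H. rewrite H in Hi0 by auto.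
      destruct b; discriminate. }
    simpl. rewrite Hpeval, Htarget, eqb_reflx. auto.
Qed.

Lemma errs_of_peval b n t x : peval t x = b -> target b n x = negb b ->
  errs (target b n) (Some t) x = true.
Proof. intros H1 H2. simpl. rewrite H1, H2. destruct b; reflexivity. Qed.

Lemma all_set_of_errs_clean b n t x : clean b n t ->
  errs (target b n) (Some t) x = true -> all_set b (leaves t) x /\ target b n x = negb b.
Proof.
  intros Hc Hx. apply (errs_clean b n t x Hc) in Hx as [Hx Hh].
  split; auto. apply (peval_all_gates b t x (proj1 Hc)), Hx.
Qed.

Lemma insert_same_gate b n t k l side : clean b n t -> ~ In l (leaves t) -> (l < n)%nat ->
  (k < nnodes t)%nat ->
  let t' := modify_at t k (graft b l side) in
  clean b n t' /\ nleaves t' = S (nleaves t) /\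
  forall x, errs (target b n) (Some t') x = true -> errs (target b n) (Some t) x = true.
Proof.
  intros Hc Hl Hln Hk t'. pose proof Hc as [Hm [Hnd Hlt]].
  destruct (modify_at_leaves b t k Hk) as [u [pre [suf [H1 [H2 H3]]]]].
  destruct (H3 (graft b l side)) as [F1 [F2 F3]].
  assert (Hp : Permutation (leaves t') (l :: leaves t)).
  { unfold t'. rewrite F1, H1. unfold graft; destruct side; cbn [leaves].
    - replace (pre ++ (leaves u ++ [l]) ++ suf) with ((pre ++ leaves u) ++ l :: suf)
        by (rewrite <- !app_assoc; reflexivity).
      rewrite (app_assoc pre (leaves u) suf). symmetry. apply Permutation_middle.
    - symmetry. apply Permutation_middle. }
  assert (Hc' : clean b n t').
  { split; [apply F2; auto; unfold graft; destruct side; simpl; auto|split].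
    - apply (Permutation_NoDup (Permutation_sym Hp)). constructor; auto.
    - intros j Hj. apply (Permutation_in _ Hp) in Hj. destruct Hj as [<-|Hj]; auto. }
  split; [exact Hc'|split].
  - rewrite !nleaves_leaves, (Permutation_length Hp). reflexivity.
  - intros x Hx. apply (all_set_of_errs_clean b n t' x Hc') in Hx as [Hx Hh].
    apply errs_of_peval; auto. apply (peval_all_gates b t x Hm).
    intros j Hj. apply Hx, (Permutation_in _ (Permutation_sym Hp)). right; auto.
Qed.

Lemma insert_dual_gate_worse b n t k l side : clean b n t -> ~ In l (leaves t) -> (l < n)%nat ->
  (k < nnodes t)%nat ->
  worse_by n (target b n) (Some t) (Some (modify_at t k (graft (negb b) l side)))
    ((/ 2) ^ S (nleaves t)).
Proof.
  intros Hc Hl Hln Hk. pose proof Hc as [Hm [Hnd Hlt]].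
  destruct (modify_at_leaves b t k Hk) as [u [pre [suf [H1 [H2 H3]]]]].
  destruct (H3 (graft (negb b) l side)) as [_ [_ F3]].
  destruct (witness_set b n t u pre suf [l] Hc H1) as [W [HW1 HW2]];
    [constructor; auto|intros j [<-|[]]; auto|].
  exists W. split; [exact HW1|split].
  - intros x Hx. apply (all_set_of_errs_clean b n t x Hc) in Hx as [Hx Hh].
    rewrite H1, !all_set_app in Hx. destruct Hx as [Hpre [Hu Hsuf]].
    apply errs_of_peval; auto. apply (F3 Hm x). split; [apply all_set_app; auto|].
    unfold graft; destruct side; apply peval_node_dual; [left|right];
      apply (peval_all_gates b u x (H2 Hm)); auto.
  - intros x Hx. destruct (HW2 x Hx) as [Ht [Hset Hh]]. split; auto.
    apply errs_of_peval; auto. apply (F3 Hm x).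
    apply (all_set_app b [l]) in Hset as [Hset' Hset]. split; auto.
    assert (nth l x false = b) by (apply Hset'; left; auto).
    unfold graft; destruct side; apply peval_node_dual; [right|left]; auto.
Qed.

Lemma delete_worse b n t k : clean b n t -> (k < nnodes t)%nat ->
  worse_by n (target b n) (Some t) (del_at t k) ((/ 2) ^ S (nleaves t)).
Proof.
  intros Hc Hk. pose proof Hc as [Hm [Hnd Hlt]].
  destruct k as [|k].
  - replace (del_at t 0) with (@None ptree) by (destruct t; reflexivity).
    destruct (witness_set b n t t [] [] [] Hc) as [W [HW1 HW2]];
      [simpl; rewrite app_nil_r; auto|auto|intros _ []|].
    exists W. split; [|split]; auto.
    + refine (Rle_trans _ _ _ _ HW1). apply pow_half_le. simpl. lia.
    + intros x Hx. destruct (HW2 x Hx) as [Ht _]. auto.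
  - destruct (del_at_leaves b t (S k) ltac:(lia) Hm) as [t' [u [pre [suf [D1 [D2 [D3 D4]]]]]]].
    rewrite D1.
    destruct (witness_set b n t u pre suf [] Hc D2) as [W [HW1 HW2]]; [auto|intros _ []|].
    exists W. split; [|split].
    + refine (Rle_trans _ _ _ _ HW1). apply pow_half_le. simpl. lia.
    + intros x Hx. apply (all_set_of_errs_clean b n t x Hc) in Hx as [Hx Hh].
      apply errs_of_peval; auto. apply (peval_all_gates b t' x D4). rewrite D3.
      rewrite D2, !all_set_app in Hx. apply all_set_app. tauto.
    + intros x Hx. destruct (HW2 x Hx) as [Ht [Hset Hh]]. split; auto.
      apply errs_of_peval; auto. apply (peval_all_gates b t' x D4). rewrite D3. exact Hset.
Qed.

Lemma sub_leaf_fresh_clean b n t j l : clean b n t -> ~ In l (leaves t) -> (l < n)%nat ->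
  clean b n (sub_leaf t j l) /\ nleaves (sub_leaf t j l) = nleaves t.
Proof.
  intros [Hm [Hnd Hlt]] Hl Hln. destruct (sub_leaf_leaves b t j l) as [pre [y [suf [H1 [H2 H3]]]]].
  rewrite H1 in Hnd. apply NoDup_remove_1 in Hnd.
  split; [split; [auto|split]|].
  - rewrite H2. apply (Permutation_NoDup (Permutation_middle _ _ _)). constructor; auto.
    intro H. apply Hl. rewrite H1, in_app_iff in *. simpl. tauto.
  - intros i Hi. rewrite H2, in_app_iff in Hi. simpl in Hi.
    destruct Hi as [Hi|[<-|Hi]]; auto; apply Hlt; rewrite H1, in_app_iff; simpl; tauto.
  - rewrite !nleaves_leaves, H1, H2, !length_app. auto.
Qed.

(** * One iteration of RLS-GP *)

Definition mutation_mean (t : ptree) (op l : nat) (g : bool) (F : program -> R) : R :=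
  match op with
  | O => expect (unif (seq 0 (nnodes t))) (fun k =>
           expect (unif [true; false]) (fun side => F (Some (modify_at t k (graft g l side)))))
  | 1%nat => expect (unif (seq 0 (nnodes t))) (fun k => F (del_at t k))
  | _ => expect (unif (seq 0 (nleaves t))) (fun j => F (Some (sub_leaf t j l)))
  end.

Lemma expect_HVL_Some n t F : expect (HVL_Prime n (Some t)) F =
  expect (unif [0; 1; 2]%nat) (fun op => expect (unif (seq 0 n)) (fun l =>
    expect (unif [true; false]) (fun g => mutation_mean t op l g F))).
Proof.
  unfold HVL_Prime. rewrite expect_bind. apply expect_ext. intro op.
  rewrite expect_bind. apply expect_ext. intro l.
  rewrite expect_bind. apply expect_ext. intro g.
  destruct op as [|[|]]; rewrite expect_bind; apply expect_ext; intro k; cbn [mutation_mean].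
  - rewrite expect_bind. apply expect_ext. intro side. apply expect_ret.
  - apply expect_ret.
  - apply expect_ret.
Qed.

Lemma seq_nonnil m : (1 <= m)%nat -> seq 0 m <> [].
Proof. destruct m; [lia|discriminate]. Qed.

Lemma is_prob_HVL n X : (1 <= n)%nat -> is_prob (HVL_Prime n X).
Proof.
  intro Hn. unfold HVL_Prime.
  apply is_prob_bind; [apply is_prob_unif; discriminate|intros [w op] _; cbn [snd]].
  apply is_prob_bind; [apply is_prob_unif, seq_nonnil; auto|intros [w' l] _; cbn [snd]].
  apply is_prob_bind; [apply is_prob_unif; discriminate|intros [w'' g] _; cbn [snd]].
  destruct X as [t|]; [|apply is_prob_ret].
  pose proof (nnodes_pos t). pose proof (nleaves_pos t).
  destruct op as [|[|]]; (apply is_prob_bind; [apply is_prob_unif, seq_nonnil; auto|intros]).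
  - apply is_prob_bind; [apply is_prob_unif; discriminate|intros; apply is_prob_ret].
  - apply is_prob_ret.
  - apply is_prob_ret.
Qed.

Definition selection (ell : nat) (h : list bool -> bool) (X X' : program)
    (S : list (list bool)) : state :=
  if andb (Nat.leb (LeafCount X') ell) (Nat.leb (sampled_error h X' S) (sampled_error h X S))
  then Running X' else Running X.

Lemma expect_rls_step n ell s c' h X f :
  expect (rls_step n ell s c' h (Running X)) f =
  expect (training_set n s) (fun S =>
    if Rle_dec (INR (sampled_error h X S)) (c' * lg (INR n)) then f (Done X)
    else expect (HVL_Prime n X) (fun X' => f (selection ell h X X' S))).
Proof.
  unfold rls_step. rewrite expect_bind. apply expect_ext. intro S.
  destruct (Rle_dec _ _); [apply expect_ret|]. rewrite expect_bind. apply expect_ext. intro X'.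
  unfold selection. destruct (andb _ _); apply expect_ret.
Qed.

Lemma is_prob_rls_step n ell s c' h st : (1 <= n)%nat -> is_prob (rls_step n ell s c' h st).
Proof.
  intro Hn. destruct st; cbn [rls_step]; [|apply is_prob_ret].
  apply is_prob_bind; [apply is_prob_training_set|intros]. destruct (Rle_dec _ _);
  [apply is_prob_ret|].
  apply is_prob_bind; [apply is_prob_HVL; auto|intros]. destruct (andb _ _); apply is_prob_ret.
Qed.

Lemma is_prob_rls_run n ell s c' h T : (1 <= n)%nat -> is_prob (rls_run n ell s c' h T).
Proof.
  intro Hn. induction T; cbn [rls_run]; [apply is_prob_ret|].
  apply is_prob_bind; auto. intros; apply is_prob_rls_step; auto.
Qed.

Lemma expect_rls_run_le n ell s c' h (V : nat -> state -> R) : (1 <= n)%nat ->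
  (forall m st, expect (rls_step n ell s c' h st) (V m) <= V (S m) st) ->
  forall T m, expect (rls_run n ell s c' h T) (V m) <= V (m + T)%nat (Running None).
Proof.
  intros Hn Hstep T. induction T as [|T IH]; intro m; cbn [rls_run].
  - rewrite expect_ret, Nat.add_0_r. lra.
  - rewrite expect_bind. apply Rle_trans with (expect (rls_run n ell s c' h T) (V (S m))).
    + apply expect_le; [apply is_prob_rls_run; auto|]. intros; apply Hstep.
    + replace (m + S T)%nat with (S m + T)%nat by lia. apply IH.
Qed.

(** * The potential *)

Definition decay : R := 23 / 24.

Section Drift.

Variables (n ell s : nat) (c c' : R) (b : bool) (ks : nat) (eps : R).

Local Notation thr := (c' * lg (INR n)).
Local Notation h := (target b n).

Hypothesis n_pos : (1 <= n)%nat.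
Hypothesis n_le_ell : (n <= ell)%nat.
Hypothesis thr_ge1 : 1 <= thr.
Hypothesis thr_lt_s : thr < INR s.
Hypothesis thr_small : thr / (4 * INR s) <= Rpower (INR n) (- c).
Hypothesis eps_step :
  exp (thr - INR s * Rpower (INR n) (- c) / 2) + exp (- (thr / 8)) + INR ks / INR n <= eps.
Hypothesis eps_stop : exp (- (thr / 2)) <= eps.
Hypothesis ks_large : 4 * INR s < 2 ^ ks.
Hypothesis ks_small : (2 * ks <= n)%nat.

(* [eps] bounds the probability of failing in one iteration, and [2 ^ (ks - k)] measures how far
   a clean tree with [k] leaves is from having the [ks] leaves that make its error negligible;
   one iteration multiplies this distance by at most [decay] in expectation. *)
Definition pot (t k : nat) : R := Rmin 1 (INR t * eps + decay ^ t * 2 ^ (ks - k)).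

(* An upper bound on the probability of not succeeding within [t] more iterations from [st]. *)
Definition potential (t : nat) (st : state) : R :=
  match st with
  | Done X => if success n c h (Done X) then 0 else 1
  | Running None => match t with O => 1 | S t' => pot t' 1 end
  | Running (Some tr) => if clean_dec b n tr then pot t (nleaves tr) else 1
  end.

Lemma eps_pos : 0 < eps.
Proof. pose proof (exp_pos (- (thr / 2))). lra. Qed.

Lemma pot_lin_nonneg t k : 0 <= INR t * eps + decay ^ t * 2 ^ (ks - k).
Proof.
  pose proof eps_pos. pose proof (pos_INR t).
  assert (0 < decay ^ t) by (apply pow_lt; unfold decay; lra).
  assert (0 < 2 ^ (ks - k)) by (apply pow_lt; lra). nra.
Qed.

Lemma pot_bounds t k : 0 <= pot t k <= 1.
Proof. split; [apply Rmin_glb; [lra|apply pot_lin_nonneg]|apply Rmin_l]. Qed.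

Lemma pot_le t k : pot t k <= INR t * eps + decay ^ t * 2 ^ (ks - k).
Proof. apply Rmin_r. Qed.

Lemma potential_bounds t st : 0 <= potential t st <= 1.
Proof.
  destruct st as [[tr|]|X]; cbn [potential].
  - destruct (clean_dec b n tr); [apply pot_bounds|lra].
  - destruct t; [lra|apply pot_bounds].
  - destruct (success n c h (Done X)); lra.
Qed.

Lemma potential_clean t tr : clean b n tr -> potential t (Running (Some tr)) = pot t (nleaves tr).
Proof. intro H. cbn [potential]. destruct (clean_dec b n tr); tauto. Qed.

Lemma potential_0 st : potential 0 st = 1 - (if success n c h st then 1 else 0).
Proof.
  destruct st as [[tr|]|X]; cbn [potential success]; [|lra|destruct (Rle_dec _ _); lra].
  destruct (clean_dec b n tr); [|lra]. unfold pot. simpl.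
  rewrite Rmult_0_l, Rplus_0_l, Rmult_1_l, Rmin_left; [lra|]. apply pow_R1_Rle. lra.
Qed.

Lemma expect_potential_le1 {A} t (d : Defs.dist A) (f : A -> state) :
  is_prob d -> expect d (fun a => potential t (f a)) <= 1.
Proof. intro Hd. apply expect_le_const; auto. intros; apply potential_bounds. Qed.

Lemma drift_empty t :
  expect (rls_step n ell s c' h (Running None)) (potential t) <= potential (S t) (Running None).
Proof.
  rewrite expect_rls_step. apply expect_le_const; [apply is_prob_training_set|].
  intros [w S] HS. cbn [snd potential].
  apply training_set_length in HS. cbn [snd] in HS.
  destruct (Rle_dec _ _) as [Hstop|_].
  { exfalso. cbn [sampled_error] in Hstop. rewrite HS in Hstop. lra. }
  apply expect_le_const; [apply is_prob_HVL; auto|].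
  intros [w' X'] HX. cbn [snd]. unfold HVL_Prime in HX.
  apply In_bind in HX as [[w1 op] [_ [pc [Hc HX]]]]. cbn [snd] in Hc, HX. subst X'.
  apply In_bind in Hc as [[w2 l] [Hl [pd [Hd ->]]]]. cbn [snd] in Hd.
  apply In_bind in Hd as [[w3 g] [_ [pe [[<-|[]] ->]]]]. cbn [snd].
  apply In_unif in Hl. cbn [snd] in Hl. rewrite in_seq in Hl.
  unfold selection. cbn [LeafCount nleaves sampled_error].
  replace (Nat.leb 1 ell) with true by (symmetry; apply Nat.leb_le; lia).
  replace (Nat.leb _ (length S)) with true by (symmetry; apply Nat.leb_le, filter_length_le).
  cbn [andb]. rewrite potential_clean; [cbn [nleaves]; lra|].
  split; [exact I|split; [repeat constructor; intros []|intros j [<-|[]]; lia]].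
Qed.

Section CleanTree.

Variable tr : ptree.
Hypothesis tr_clean : clean b n tr.
Variable t : nat.

Local Notation k := (nleaves tr).
Local Notation base := (INR t * eps + decay ^ t * 2 ^ (ks - k)).
Local Notation after X' :=
  (expect (training_set n s) (fun S => potential t (selection ell h (Some tr) X' S))).

Lemma after_le1 X' : after X' <= 1.
Proof. apply expect_potential_le1, is_prob_training_set. Qed.

Lemma after_neutral t' : clean b n t' -> nleaves t' = k -> after (Some t') <= base.
Proof.
  intros Hc' Hk. apply expect_le_const; [apply is_prob_training_set|]. intros [w S] _. cbn [snd].
  unfold selection. destruct (andb _ _); rewrite potential_clean; auto; [rewrite Hk|]; apply pot_le.
Qed.

Lemma after_progress t' : clean b n t' -> nleaves t' = S k -> (k < ks)%nat ->
  (forall x, errs h (Some t') x = true -> errs h (Some tr) x = true) ->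
  after (Some t') <= INR t * eps + decay ^ t * 2 ^ (ks - S k).
Proof.
  intros Hc' Hk Hks Herr. apply expect_le_const; [apply is_prob_training_set|].
  intros [w S] _. cbn [snd]. unfold selection.
  replace (andb _ _) with true; [rewrite potential_clean, Hk by auto; apply pot_le|].
  symmetry. apply andb_true_iff. split; apply Nat.leb_le.
  - pose proof (nleaves_clean_le b n t' Hc'). simpl. lia.
  - rewrite !sampled_error_nhits. apply nhits_mono. auto.
Qed.

(* A worse mutant is accepted only if the training set misses its witness set. *)
Lemma after_worse X' : thr / 4 < INR s * (/ 2) ^ k ->
  worse_by n h (Some tr) X' ((/ 2) ^ S k) -> after X' <= base + exp (- (thr / 8)).
Proof.
  intros Hlarge [W [HW [Herr Hwit]]].
  apply Rle_trans with (expect (training_set n s) (fun S => base + b2R (Nat.eqb (nhits W S) 0))).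
  - apply expect_le; [apply is_prob_training_set|]. intros [w S] _. cbn [snd]. unfold selection.
    pose proof (pot_lin_nonneg t k). destruct (andb _ _) eqn:Hacc.
    + apply andb_true_iff in Hacc as [_ Hacc]. apply Nat.leb_le in Hacc.
      rewrite !sampled_error_nhits in Hacc. pose proof (nhits_add_le h _ _ W S Herr Hwit).
      replace (Nat.eqb (nhits W S) 0) with true by (symmetry; apply Nat.eqb_eq; lia).
      pose proof (potential_bounds t (Running X')). unfold b2R. lra.
    + rewrite potential_clean by auto. pose proof (pot_le t k).
      unfold b2R. destruct (Nat.eqb _ _); lra.
  - rewrite expect_plus, expect_const by apply is_prob_training_set.
    apply Rplus_le_compat_l. eapply Rle_trans; [apply expect_nhits_zero|].
    apply exp_le. simpl in HW. nra.
Qed.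

Lemma k_lt_ks : thr / 4 < INR s * (/ 2) ^ k -> (k < ks)%nat.
Proof.
  intro Hlarge. destruct (lt_dec k ks) as [|Hge]; auto. exfalso.
  assert (Hpow : (/ 2) ^ k <= (/ 2) ^ ks) by (apply pow_half_le; lia).
  assert (INR s * (/ 2) ^ ks < / 4).
  { rewrite pow_inv. apply Rmult_lt_reg_r with (4 * 2 ^ ks); [pose proof (pow_lt 2 ks); lra|].
    field_simplify; [lra|apply pow_nonzero; lra]. }
  pose proof (pos_INR s). nra.
Qed.

Local Notation in_tree l := (if in_dec Nat.eq_dec l (leaves tr) then true else false).
Local Notation rho := (exp (- (thr / 8))).
Local Notation gain := (decay ^ t * 2 ^ (ks - k) / 2).

(* A fresh literal gives progress for an insertion with gate [b], is neutral for a
   substitution and makes the mutant worse otherwise; a literal of [tr] costs at most 1. *)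
Local Notation mutation_bound op l g := (base + rho + b2R (in_tree l)
  - gain * b2R (Nat.eqb op 0) * b2R (Bool.eqb g b) * (1 - b2R (in_tree l))).

Lemma mutation_mean_le op l g : thr / 4 < INR s * (/ 2) ^ k -> In op [0; 1; 2]%nat -> (l < n)%nat ->
  mutation_mean tr op l g (fun X' => after X') <= mutation_bound op l g.
Proof.
  intros Hlarge Hop Hl. pose proof (pot_lin_nonneg t k). pose proof (exp_pos (- (thr / 8))).
  pose proof (k_lt_ks Hlarge) as Hks.
  assert (Hnn : seq 0 (nnodes tr) <> []) by apply seq_nonnil, nnodes_pos.
  assert (Hnl : seq 0 (nleaves tr) <> []) by apply seq_nonnil, nleaves_pos.
  destruct (in_dec Nat.eq_dec l (leaves tr)) as [Hin|Hfresh]; unfold b2R at 1 4.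
  - apply Rle_trans with 1; [|lra].
    destruct op as [|[|]]; cbn [mutation_mean];
    repeat (apply expect_unif_le; [auto; discriminate|intros]);
      apply after_le1.
  - destruct op as [|[|[|]]]; cbn [mutation_mean]; [| | |simpl in Hop; lia].
    + apply expect_unif_le; auto. intros k' Hk'. rewrite in_seq in Hk'.
      apply expect_unif_le; [discriminate|]. intros side _.
      destruct (Bool.eqb_spec g b) as [->|Hg].
      * destruct (insert_same_gate b n tr k' l side tr_clean Hfresh Hl ltac:(lia)) as [C1 [C2 C3]].
        eapply Rle_trans; [apply after_progress; eauto|].
        replace (ks - k)%nat with (S (ks - S k)) by lia. simpl. lra.
      * replace g with (negb b) by (destruct g, b; simpl in *; congruence).
        eapply Rle_trans; [apply after_worse, insert_dual_gate_worse; auto; lia|].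
        simpl. lra.
    + apply expect_unif_le; auto. intros k' Hk'. rewrite in_seq in Hk'.
      eapply Rle_trans; [apply after_worse, delete_worse; auto; lia|]. simpl. lra.
    + apply expect_unif_le; auto. intros j _.
      destruct (sub_leaf_fresh_clean b n tr j l tr_clean Hfresh Hl) as [S1 S2].
      eapply Rle_trans; [apply after_neutral; eauto|]. simpl. lra.
Qed.

Lemma expect_in_tree : expect (unif (seq 0 n)) (fun l => b2R (in_tree l)) = INR k / INR n.
Proof.
  destruct tr_clean as [_ [Hnd Hlt]].
  rewrite expect_unif, sumf_b2R, length_seq, (length_filter_seq _ n (leaves tr)); auto.
  - rewrite nleaves_leaves. unfold Rdiv. apply Rmult_comm.
  - intros j _. destruct (in_dec _ _ _); split; auto; discriminate.
Qed.

Lemma expect_mutation_bound :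
  expect (unif [0; 1; 2]%nat) (fun op => expect (unif (seq 0 n)) (fun l =>
    expect (unif [true; false]) (fun g => mutation_bound op l g)))
  = base + rho + INR k / INR n - gain / 6 * (1 - INR k / INR n).
Proof.
  assert (Hg : forall op l, expect (unif [true; false]) (fun g => mutation_bound op l g) =
    (base + rho - gain * b2R (Nat.eqb op 0) / 2)
    + (1 + gain * b2R (Nat.eqb op 0) / 2) * b2R (in_tree l)).
  { intros op l. rewrite expect_unif. cbn [sumf fold_right length INR].
    destruct b, (in_tree l), (Nat.eqb op 0); unfold b2R; simpl; field. }
  rewrite expect_unif. cbn [sumf fold_right length INR]. rewrite !(expect_ext _ _ _ (Hg _)).
  assert (Hseq : is_prob (unif (seq 0 n))) by apply is_prob_unif, seq_nonnil, n_pos.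
  rewrite !expect_plus, !expect_const, !expect_scal, expect_in_tree by exact Hseq.
  simpl. unfold b2R. simpl. field. apply not_0_INR. lia.
Qed.

Local Notation q := (input_prob n (errs h (Some tr))).

Lemma drift_clean_stop : INR s * q <= thr / 4 ->
  expect (rls_step n ell s c' h (Running (Some tr))) (potential t) <= eps.
Proof.
  intro Hsmall. pose proof (input_prob_bounds n (errs h (Some tr))).
  assert (Hsucc : success n c h (Done (Some tr)) = true).
  { unfold success. rewrite gen_error_input_prob. destruct (Rle_dec _ _) as [|Hn]; auto.
    exfalso. apply Hn. eapply Rle_trans; [|apply thr_small].
    apply Rmult_le_reg_l with (4 * INR s); [lra|].
    replace (4 * INR s * (thr / (4 * INR s))) with thr by (field; lra). lra. }
  rewrite expect_rls_step.
  apply Rle_trans with (expect (training_set n s)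
    (fun S => if Rle_dec (INR (nhits (errs h (Some tr)) S)) thr then 0 else 1)).
  - apply expect_le; [apply is_prob_training_set|]. intros [w S] _. cbn [snd].
    rewrite sampled_error_nhits. destruct (Rle_dec _ _).
    + cbn [potential]. rewrite Hsucc. lra.
    + apply expect_potential_le1, is_prob_HVL, n_pos.
  - eapply Rle_trans; [apply expect_nhits_gt|]. eapply Rle_trans; [|apply eps_stop].
    apply exp_le. lra.
Qed.

Lemma drift_clean_go : thr / 4 < INR s * q ->
  expect (rls_step n ell s c' h (Running (Some tr))) (potential t) <=
  exp (thr - INR s * Rpower (INR n) (- c) / 2)
  + (base + rho + INR k / INR n - gain / 6 * (1 - INR k / INR n)).
Proof.
  intro Hlarge. assert (Hk : thr / 4 < INR s * (/ 2) ^ k).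
  { pose proof (error_prob_clean_le b n tr tr_clean). pose proof (pos_INR s). nra. }
  rewrite expect_rls_step.
  apply Rle_trans with (expect (training_set n s) (fun S =>
    potential t (Done (Some tr)) *
      (if Rle_dec (INR (nhits (errs h (Some tr)) S)) thr then 1 else 0)
    + expect (HVL_Prime n (Some tr)) (fun X' => potential t (selection ell h (Some tr) X' S)))).
  { apply expect_le; [apply is_prob_training_set|]. intros [w S] _. cbn [snd].
    rewrite sampled_error_nhits. pose proof (potential_bounds t (Done (Some tr))).
    assert (0 <= expect (HVL_Prime n (Some tr))
      (fun X' => potential t (selection ell h (Some tr) X' S))).
    { apply expect_nonneg; [apply is_prob_HVL, n_pos|intros; apply potential_bounds]. }
    destruct (Rle_dec _ _); lra. }
  rewrite expect_plus, expect_scal, expect_swap. apply Rplus_le_compat.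
  - cbn [potential]. destruct (success n c h (Done (Some tr))) eqn:Hsucc;
      [rewrite Rmult_0_l; left; apply exp_pos|rewrite Rmult_1_l].
    unfold success in Hsucc. rewrite gen_error_input_prob in Hsucc.
    destruct (Rle_dec _ _) as [|Hfail]; [discriminate|].
    eapply Rle_trans; [apply expect_nhits_le|]. apply exp_le. pose proof (pos_INR s). nra.
  - rewrite expect_HVL_Some, <- expect_mutation_bound.
    apply expect_le; [apply is_prob_unif; discriminate|]. intros [w op] Hop. cbn [snd].
    apply expect_le; [apply is_prob_unif, seq_nonnil, n_pos|]. intros [w' l] Hl. cbn [snd].
    apply expect_le; [apply is_prob_unif; discriminate|]. intros [w'' g] _. cbn [snd].
    apply In_unif in Hop, Hl. cbn [snd] in Hop, Hl. rewrite in_seq in Hl.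
    apply mutation_mean_le; auto. lia.
Qed.

Lemma drift_clean :
  expect (rls_step n ell s c' h (Running (Some tr))) (potential t) <=
  potential (S t) (Running (Some tr)).
Proof.
  rewrite potential_clean by auto. unfold pot at 1.
  apply Rmin_glb; [apply expect_potential_le1 with (f := fun st => st), is_prob_rls_step, n_pos|].
  pose proof (pot_lin_nonneg t k). pose proof eps_pos. pose proof (pos_INR t).
  assert (Hdecay : 0 < decay ^ S t) by (apply pow_lt; unfold decay; lra).
  rewrite S_INR. destruct (Rle_dec (INR s * q) (thr / 4)) as [Hsmall|Hlarge].
  - eapply Rle_trans; [apply drift_clean_stop; auto|].
    pose proof (pow_lt 2 (ks - k)). nra.
  - apply Rnot_le_lt in Hlarge. eapply Rle_trans; [apply drift_clean_go; auto|].
    assert (Hks : (k < ks)%nat).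
    { apply k_lt_ks. pose proof (error_prob_clean_le b n tr tr_clean).
      pose proof (pos_INR s). nra. }
    assert (Hn : 0 < INR n) by (apply lt_0_INR; lia).
    assert (Hkn : INR k / INR n <= INR ks / INR n).
    { apply Rmult_le_compat_r; [left; apply Rinv_0_lt_compat; auto|apply le_INR; lia]. }
    assert (Hkn2 : INR k / INR n <= / 2).
    { apply Rmult_le_reg_r with (INR n); auto. unfold Rdiv. rewrite Rmult_assoc, Rinv_l by lra.
      assert (2 * INR k <= INR n)
        by (replace 2 with (INR 2) by reflexivity; rewrite <- mult_INR; apply le_INR; lia).
      lra. }
    assert (0 <= INR k / INR n)
      by (apply Rmult_le_pos; [apply pos_INR|left; apply Rinv_0_lt_compat; auto]).
    change (decay ^ S t) with (decay * decay ^ t). unfold decay in *.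
    set (P := (23 / 24) ^ t * 2 ^ (ks - k)) in *.
    assert (0 < P) by (unfold P; apply Rmult_lt_0_compat; apply pow_lt; lra).
    replace (23 / 24 * (23 / 24) ^ t * 2 ^ (ks - k)) with (23 / 24 * P) by (unfold P; ring).
    nra.
Qed.

End CleanTree.

Lemma drift t st :
  expect (rls_step n ell s c' h st) (potential t) <= potential (S t) st.
Proof.
  destruct st as [[tr|]|X].
  - destruct (clean_dec b n tr) as [Hc|Hc]; [apply drift_clean; auto|].
    cbn [potential]. destruct (clean_dec b n tr); [tauto|].
    apply expect_potential_le1 with (f := fun st => st), is_prob_rls_step, n_pos.
  - apply drift_empty.
  - cbn [rls_step]. rewrite expect_ret. cbn [potential]. lra.
Qed.

Lemma success_prob_ge T :
  prob (rls_run n ell s c' h T) (success n c h) >= 1 - potential T (Running None).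
Proof.
  pose proof (expect_rls_run_le n ell s c' h potential n_pos drift T 0) as H.
  rewrite (expect_ext _ _ _ potential_0) in H. unfold Rminus in H.
  rewrite expect_plus, expect_opp, expect_const in H by apply is_prob_rls_run, n_pos.
  rewrite prob_expect, Nat.add_0_l in *. lra.
Qed.

End Drift.

(** * Choice of the constants *)

Lemma ln2_bounds : / 2 < ln 2 < 1.
Proof.
  split; [apply ln_lt_2|]. rewrite <- (ln_exp 1). apply ln_increasing; [lra|].
  pose proof (exp_ineq1 1 ltac:(lra)). lra.
Qed.

Lemma ln_lt_self x : 0 < x -> ln x < x.
Proof.
  intro H. rewrite <- (ln_exp x) at 2. apply ln_increasing; auto.
  pose proof (exp_ineq1_le x). lra.
Qed.

Lemma ln_le x y : 0 < x -> x <= y -> ln x <= ln y.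
Proof. intros H1 H2. destruct (Req_dec x y) as [->|]; [lra|left; apply ln_increasing; lra]. Qed.

Lemma ceilR_bounds x : 0 <= x -> x <= INR (Z.to_nat (ceilR x)) < x + 1.
Proof.
  intro Hx. unfold ceilR. destruct (base_Int_part (- x)) as [H1 H2].
  assert (Hz : (0 <= - Int_part (- x))%Z) by (apply le_IZR; rewrite opp_IZR; lra).
  rewrite INR_IZR_INZ, Z2Nat.id, opp_IZR by auto. lra.
Qed.

Lemma decay_pow_le m : decay ^ m <= exp (- (INR m / 24)).
Proof.
  replace (- (INR m / 24)) with (INR m * (- (1 / 24))) by lra. rewrite <- exp_pow.
  apply pow_incr. unfold decay. split; [lra|]. pose proof (exp_ineq1_le (- (1 / 24))). lra.
Qed.

Section Instantiation.

Variables (c : R) (n : nat).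
Hypothesis c_pos : 0 < c.
Hypothesis n_large : (2 ^ 18 + Z.to_nat (up (64 * (c + 5) ^ 2)) <= n)%nat.

Local Notation N := (INR n).
Local Notation L := (lg (INR n)).
Local Notation s := (sample_size n c).
Local Notation P := (Rpower (INR n) c).

(* The smallest [ks] with [4 s < 2 ^ ks]: clean trees with [ks] leaves are correct on all but a
   fraction [1 / (4 s)] of the inputs. *)
Local Notation ks := (S (Nat.log2 (4 * sample_size n c))).
Local Notation eps := ((2 + INR ks) / INR n).

Lemma n_ge : 2 ^ 18 <= N.
Proof.
  replace 2 with (INR 2) by reflexivity. rewrite <- pow_INR. apply le_INR. lia.
Qed.

Lemma n_gt0 : 0 < N.
Proof. pose proof n_ge. pose proof (pow_lt 2 18). lra. Qed.

Lemma n_gt : 64 * (c + 5) ^ 2 < N.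
Proof.
  destruct (archimed (64 * (c + 5) ^ 2)) as [Hup _].
  assert (Hz : (0 <= up (64 * (c + 5) ^ 2))%Z) by (apply le_IZR; nra).
  eapply Rlt_le_trans; [apply Hup|].
  rewrite <- (Z2Nat.id _ Hz), <- INR_IZR_INZ. apply le_INR. lia.
Qed.

Lemma lg_mul_ln2 : L * ln 2 = ln N.
Proof. pose proof ln2_bounds. unfold lg. field. lra. Qed.

Lemma lg_ge : 18 <= L.
Proof.
  pose proof ln2_bounds. pose proof n_ge. pose proof n_gt0. pose proof lg_mul_ln2.
  assert (18 * ln 2 <= ln N).
  { replace 18 with (INR 18) by (simpl; lra). rewrite <- ln_pow by lra.
    apply ln_le; [apply pow_lt; lra|lra]. }
  nra.
Qed.

Lemma ln_le_lg : 0 <= ln N <= L /\ L <= 2 * ln N.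
Proof. pose proof ln2_bounds. pose proof lg_ge. pose proof lg_mul_ln2. nra. Qed.

Lemma lg_lt_sqrt : L < 4 * sqrt N.
Proof.
  pose proof ln_le_lg. pose proof n_ge. pose proof n_gt0.
  assert (Hs : 0 < sqrt N) by (apply sqrt_lt_R0; lra).
  assert (ln N < 2 * sqrt N).
  { rewrite <- (sqrt_sqrt N) at 1 by lra. rewrite ln_mult by auto.
    pose proof (ln_lt_self _ Hs). lra. }
  lra.
Qed.

Lemma Rpower_n_ge1 : 1 <= P.
Proof.
  rewrite <- (Rpower_O N) by (pose proof n_ge; lra).
  apply Rle_Rpower; [pose proof n_ge; lra|lra].
Qed.

Lemma sample_size_bounds : P * L ^ 2 <= INR s < P * L ^ 2 + 1.
Proof.
  pose proof Rpower_n_ge1. pose proof lg_ge.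
  apply ceilR_bounds. apply Rmult_le_pos; [lra|apply pow_le; lra].
Qed.

Lemma ks_bounds : 4 * INR s < 2 ^ ks <= 8 * INR s.
Proof.
  pose proof sample_size_bounds. pose proof Rpower_n_ge1. pose proof lg_ge.
  assert (Hs : (0 < 4 * s)%nat) by (apply INR_lt; rewrite mult_INR; simpl; nra).
  destruct (Nat.log2_spec _ Hs) as [Hlo Hhi].
  apply le_INR in Hlo. apply lt_INR in Hhi.
  rewrite mult_INR, pow_INR in Hlo, Hhi. replace (INR 2) with 2 in * by reflexivity.
  replace (INR 4) with 4 in * by (simpl; lra). split; [exact Hhi|]. rewrite <- tech_pow_Rmult. lra.
Qed.

Lemma ks_le : INR ks <= (c + 5) * L.
Proof.
  pose proof ln2_bounds. pose proof sample_size_bounds. pose proof ks_bounds.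
  pose proof Rpower_n_ge1. pose proof lg_ge. pose proof lg_mul_ln2.
  assert (Hlog : INR (Nat.log2 (4 * s)) * ln 2 <= ln (8 * P * L ^ 2)).
  { rewrite <- ln_pow by lra. apply ln_le; [apply pow_lt; lra|].
    rewrite <- tech_pow_Rmult in *. nra. }
  rewrite !ln_mult, ln_pow, ln_Rpower in Hlog by (try apply pow_lt; nra).
  replace 8 with (2 ^ 3) in Hlog by (simpl; lra). rewrite ln_pow in Hlog by lra.
  pose proof (ln_lt_self L ltac:(lra)).
  assert (INR (Nat.log2 (4 * s)) <= 3 + c * L + 4 * L).
  { apply Rmult_le_reg_r with (ln 2); [lra|]. replace (INR 3) with 3 in Hlog by (simpl; lra).
    replace (INR 2) with 2 in Hlog by reflexivity. nra. }
  rewrite S_INR. nra.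
Qed.

Lemma two_ks_le_n : (2 * ks <= n)%nat.
Proof.
  apply INR_le. rewrite mult_INR. replace (INR 2) with 2 by reflexivity.
  pose proof ks_le. pose proof lg_lt_sqrt. pose proof n_gt. pose proof n_ge. pose proof n_gt0.
  pose proof lg_ge.
  assert (Hsq : 0 <= sqrt N) by apply sqrt_pos.
  assert (HsqN : sqrt N * sqrt N = N) by (apply sqrt_sqrt; lra).
  assert (8 * (c + 5) < sqrt N) by nra.
  nra.
Qed.

Lemma exp_neg_lg_le : exp (- L) <= / N.
Proof.
  pose proof ln_le_lg. pose proof n_ge. pose proof n_gt0.
  replace (/ N) with (exp (- ln N)) by (rewrite exp_Ropp, exp_ln; lra).
  apply exp_le. lra.
Qed.

Lemma thr_lt_sample : 8 * L < INR s.
Proof. pose proof sample_size_bounds. pose proof Rpower_n_ge1. pose proof lg_ge. nra. Qed.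

Lemma thr_small_error : 8 * L / (4 * INR s) <= Rpower N (- c).
Proof.
  pose proof sample_size_bounds. pose proof Rpower_n_ge1. pose proof lg_ge.
  pose proof thr_lt_sample. rewrite Rpower_Ropp. apply Rmult_le_reg_r with (4 * INR s * P); [nra|].
  replace (8 * L / (4 * INR s) * (4 * INR s * P)) with (8 * L * P) by (field; nra).
  replace (/ P * (4 * INR s * P)) with (4 * INR s) by (field; lra). nra.
Qed.

Lemma eps_step_ok :
  exp (8 * L - INR s * Rpower N (- c) / 2) + exp (- (8 * L / 8)) + INR ks / N <= eps.
Proof.
  pose proof sample_size_bounds. pose proof Rpower_n_ge1. pose proof lg_ge. pose proof n_ge.
  pose proof n_gt0.
  pose proof exp_neg_lg_le.
  assert (L ^ 2 <= INR s * / P).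
  { apply Rmult_le_reg_r with P; [lra|]. rewrite Rmult_assoc, Rinv_l by lra. lra. }
  assert (exp (8 * L - INR s * Rpower N (- c) / 2) <= exp (- L)).
  { apply exp_le. rewrite Rpower_Ropp. nra. }
  replace (- (8 * L / 8)) with (- L) by lra. unfold Rdiv. lra.
Qed.

Lemma eps_stop_ok : exp (- (8 * L / 2)) <= eps.
Proof.
  pose proof lg_ge. pose proof n_ge. pose proof n_gt0. pose proof exp_neg_lg_le.
  assert (exp (- (8 * L / 2)) <= exp (- L)) by (apply exp_le; lra).
  assert (0 <= INR ks / N)
    by (apply Rmult_le_pos; [apply pos_INR|left; apply Rinv_0_lt_compat; lra]).
  assert (0 < / N) by (apply Rinv_0_lt_compat; lra).
  replace ((2 + INR ks) / N) with (2 * / N + INR ks / N) by (field; lra). lra.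
Qed.

Lemma decay_term_le T : 24 * (c + 3) * L - 2 <= INR T -> decay ^ T * 2 ^ (ks - 1) <= L ^ 2 / N.
Proof.
  intro HT. pose proof ln_le_lg. pose proof n_ge. pose proof n_gt0. pose proof ks_bounds.
  pose proof lg_ge.
  pose proof sample_size_bounds. pose proof Rpower_n_ge1.
  assert (Hexp : exp (- (INR T / 24)) <= exp (1 / 12) * exp (- ((c + 3) * ln N))).
  { rewrite <- exp_plus. apply exp_le. nra. }
  assert (Hks : 2 ^ (ks - 1) <= 16 * P * L ^ 2).
  { apply Rle_trans with (2 ^ ks); [apply Rle_pow; [lra|lia]|nra]. }
  assert (Hcube : exp (- ((c + 3) * ln N)) * P = / (N * N * N)).
  { unfold Rpower. rewrite <- exp_plus.
    replace (- ((c + 3) * ln N) + c * ln N) with (- (INR 3 * ln N)) by (simpl; lra).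
    rewrite exp_Ropp, <- exp_pow, exp_ln by lra. simpl. f_equal. ring. }
  assert (exp (1 / 12) <= 3).
  { pose proof exp_le_3. pose proof (exp_le (1 / 12) 1 ltac:(lra)). lra. }
  pose proof (decay_pow_le T). assert (0 < decay ^ T) by (apply pow_lt; unfold decay; lra).
  assert (0 < 2 ^ (ks - 1)) by (apply pow_lt; lra).
  apply Rle_trans with (exp (1 / 12) * exp (- ((c + 3) * ln N)) * (16 * P * L ^ 2)).
  { apply Rmult_le_compat; lra. }
  replace (exp (1 / 12) * exp (- ((c + 3) * ln N)) * (16 * P * L ^ 2))
    with (16 * exp (1 / 12) * L ^ 2 * (exp (- ((c + 3) * ln N)) * P)) by ring.
  rewrite Hcube. apply Rle_trans with (48 * L ^ 2 * / (N * N * N)).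
  { apply Rmult_le_compat_r; [left; apply Rinv_0_lt_compat; nra|nra]. }
  replace (48 * L ^ 2 * / (N * N * N)) with (L ^ 2 / N * (48 / (N * N))) by (field; lra).
  assert (48 / (N * N) <= 1).
  { apply Rmult_le_reg_r with (N * N); [nra|].
    unfold Rdiv. rewrite Rmult_assoc, Rinv_l by nra. nra. }
  assert (0 <= L ^ 2 / N) by (apply Rmult_le_pos; [nra|left; apply Rinv_0_lt_compat; lra]).
  nra.
Qed.

Lemma potential_start_le b :
  potential n c b ks eps (Z.to_nat (Int_part (24 * (c + 3) * L))) (Running None)
  <= (24 * (c + 3) * (c + 6) + 1) * L ^ 2 / N.
Proof.
  set (K := 24 * (c + 3)). pose proof lg_ge. pose proof n_gt0. pose proof ks_le.
  destruct (base_Int_part (K * L)) as [HI1 HI2].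
  assert (HI : (1 <= Int_part (K * L))%Z) by (apply le_IZR; unfold K in *; nra).
  assert (HT : INR (Z.to_nat (Int_part (K * L))) = IZR (Int_part (K * L)))
    by (rewrite INR_IZR_INZ, Z2Nat.id by lia; reflexivity).
  destruct (Z.to_nat (Int_part (K * L))) as [|T] eqn:ET; [apply IZR_le in HI; simpl in HT; lra|].
  rewrite S_INR in HT. cbn [potential]. eapply Rle_trans; [apply pot_le|].
  assert (Heps : 0 <= eps <= (c + 6) * L / N).
  { split; [apply Rmult_le_pos; [pose proof (pos_INR ks); lra|left; apply Rinv_0_lt_compat; lra]|].
    apply Rmult_le_compat_r; [left; apply Rinv_0_lt_compat; lra|lra]. }
  assert (HTeps : INR T * eps <= K * (c + 6) * L ^ 2 / N).
  { apply Rle_trans with (K * L * ((c + 6) * L / N)).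
    - apply Rmult_le_compat; [apply pos_INR|lra|lra|lra].
    - unfold Rdiv. nra. }
  pose proof (decay_term_le T ltac:(fold K; lra)).
  unfold Rdiv in *. lra.
Qed.

Lemma success_prob_target b ell : (n <= ell)%nat ->
  prob (rls_run n ell s 8 (target b n) (Z.to_nat (Int_part (24 * (c + 3) * L))))
    (success n c (target b n))
  >= 1 - (24 * (c + 3) * (c + 6) + 1) * L ^ 2 / N.
Proof.
  intro Hell. pose proof lg_ge. pose proof ks_bounds.
  eapply Rge_trans; [apply (success_prob_ge n ell s c 8 b ks eps)|].
  - apply INR_le. pose proof n_ge. pose proof (pow_R1_Rle 2 18 ltac:(lra)). simpl. lra.
  - exact Hell.
  - lra.
  - apply thr_lt_sample.
  - apply thr_small_error.
  - apply eps_step_ok.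
  - apply eps_stop_ok.
  - lra.
  - apply two_ks_le_n.
  - pose proof (potential_start_le b). lra.
Qed.

End Instantiation.

Theorem theorem8 :
  forall c : R, 0 < c ->
  exists c' : R, 0 < c' /\
  exists K C : R, 0 < K /\ 0 < C /\
  exists N0 : nat,
  forall n ell : nat, (N0 <= n)%nat -> (n <= ell)%nat ->
  forall h : list bool -> bool, h = AND_n n \/ h = OR_n n ->
    prob (rls_run n ell (sample_size n c) c' h
                  (Z.to_nat (Int_part (K * lg (INR n)))))
         (success n c h)
    >= 1 - C * (lg (INR n)) ^ 2 / INR n.
Proof.
  intros c Hc. exists 8. split; [lra|].
  exists (24 * (c + 3)), (24 * (c + 3) * (c + 6) + 1). split; [nra|]. split; [nra|].
  exists (2 ^ 18 + Z.to_nat (up (64 * (c + 5) ^ 2)))%nat.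
  intros n ell Hn Hell h [-> | ->].
  - exact (success_prob_target c n Hc Hn true ell Hell).
  - exact (success_prob_target c n Hc Hn false ell Hell).
Qed.
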